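(* Let $S\subseteq\mathbb{F}_2^{27}$ be the linear subspace spanned by the six vectors (written as bit strings, coordinate $1$ leftmost, coordinate $27$ rightmost) $\xi^1 = 100010001010101010100011110$, $\xi^2 = 101010111001100000001010101$, $\xi^3 = 011001100111100111100110011$, $\xi^4 = 000111100000011001100001111$, $\xi^5 = 000000011111111000011111111$, $\xi^6 = 000000000000000111111111111$, and let $Q:\mathbb{F}_2^{27}\to\mathbb{F}_2$ be the quadratic form $Q(x)= x_{1}x_{2} + x_{1}x_{3} + x_{1}x_{8} + x_{2}x_{4} + x_{2}x_{8} + x_{2}x_{16} + x_{3}x_{4} + x_{3}x_{8} + x_{3}x_{16} + x_{4}x_{8} + x_{8}x_{16}$ (arithmetic mod $2$). Define the (normalized) 27-qubit states $|S\rangle = \frac{1}{\sqrt{|S|}}\sum_{x\in S}|x\rangle$ and $|Q,S\rangle=\frac{1}{\sqrt{|S|}}\sum_{x\in S}(-1)^{Q(x)}|x\rangle$. Then $|S\rangle$ and $|Q,S\rangle$ are stabilizer states which are local unitary (LU) equivalent but not local Clifford (LC) equivalent. In particular, the LU-LC conjecture (every two LU equivalent stabilizer states are LC equivalent) is false.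
   Context: Pauli matrices $X,Y,Z$; the Pauli group $\mathcal{G}$ is generated by them. An $n$-qubit stabilizer state is the unique common $+1$ eigenvector of an Abelian subgroup of $\mathcal{G}^{\otimes n}$ of cardinality $2^n$ not containing $-I^{\otimes n}$. A single-qubit Clifford operator is a $2\times 2$ unitary $U$ with $U\mathcal{G}U^\dagger=\mathcal{G}$. Two $n$-qubit states $|\psi_0\rangle,|\psi_1\rangle$ are LU equivalent if $\bigotimes_{j=1}^n U_j|\psi_0\rangle=|\psi_1\rangle$ for some single-qubit unitaries $U_j$, and LC equivalent if this holds with all $U_j$ Clifford operators. $|x\rangle$ denotes the computational basis state labelled by $x\in\mathbb{F}_2^{27}$. *)

From HB Require Import structures.
From mathcomp Require Import all_boot all_order all_algebra.
From mathcomp Require Import complex Rstruct.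
Set Implicit Arguments.
Unset Strict Implicit.
Unset Printing Implicit Defensive.
Import Order.TTheory GRing.Theory Num.Theory.
Local Open Scope ring_scope.

Definition C : numClosedFieldType := (Rdefinitions.R)[i].

(* Basis of C^2 is indexed by 'I_2 (index 0 = |0>, index 1 = |1>). *)
Definition adjoint (U : 'M[C]_2) : 'M[C]_2 := (map_mx Num.conj U)^T.

Definition unitary2 (U : 'M[C]_2) : Prop := U *m adjoint U = 1%:M.

Definition pauliX : 'M[C]_2 := \matrix_(i < 2, j < 2) (if i != j then 1 else 0).
Definition pauliY : 'M[C]_2 :=
  \matrix_(i < 2, j < 2)
    (if (i == 0) && (j == 1) then - 'i else if (i == 1) && (j == 0) then 'i else 0).
Definition pauliZ : 'M[C]_2 :=
  \matrix_(i < 2, j < 2) (if i == j then (if i == 0 then 1 else -1) else 0).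

(* The single-qubit Pauli group: the group generated by X, Y, Z
   (every element has finite order, so closure under products suffices). *)
Inductive pauli_group : 'M[C]_2 -> Prop :=
| pauli_X : pauli_group pauliX
| pauli_Y : pauli_group pauliY
| pauli_Z : pauli_group pauliZ
| pauli_mul : forall A B, pauli_group A -> pauli_group B -> pauli_group (A *m B).

Definition clifford2 (U : 'M[C]_2) : Prop :=
  unitary2 U /\
  (forall P, pauli_group P -> pauli_group (U *m P *m adjoint U)) /\
  (forall P', pauli_group P' -> exists2 P, pauli_group P & P' = U *m P *m adjoint U).

Definition label (n : nat) := {ffun 'I_n -> 'I_2}.

(* An n-qubit (unnormalized) vector of C^(2^n) = C^(label n). *)
Definition state (n : nat) := label n -> C.

(* An n-qubit operator, given by its matrix entries <x|A|y>. *)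
Definition op (n : nat) := {ffun label n -> {ffun label n -> C}}.

Definition op_apply n (A : op n) (psi : state n) : state n :=
  fun x => \sum_(y : label n) A x y * psi y.

Definition op_mul n (A B : op n) : op n :=
  [ffun x : label n => [ffun z : label n => \sum_(y : label n) A x y * B y z]].

Definition op_id n : op n := [ffun x : label n => [ffun y : label n => if x == y then 1 else 0]].

Definition op_scale n (c : C) (A : op n) : op n := [ffun x : label n => [ffun y : label n => c * A x y]].

Definition tensor n (U : 'I_n -> 'M[C]_2) : op n :=
  [ffun x : label n => [ffun y : label n => \prod_(j < n) U j (x j) (y j)]].

Definition pauli_n n (A : op n) : Prop :=
  exists P : 'I_n -> 'M[C]_2, (forall j, pauli_group (P j)) /\ A = tensor P.

(* Stabilizer state: the unique (up to scalar) common +1 eigenvector of an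
   Abelian subgroup (listed without repetition by the sequence G) of G^{(x) n}
   of cardinality 2^n not containing -I. *)
Definition stabilizer_state n (psi : state n) : Prop :=
  exists G : seq (op n),
    (uniq G /\ size G = (2 ^ n)%N /\
     (forall A, A \in G -> pauli_n A) /\
     op_id n \in G /\
     (forall A B, A \in G -> B \in G -> op_mul A B \in G) /\
     (forall A, A \in G -> exists2 B, B \in G & op_mul A B = op_id n) /\
     (forall A B, A \in G -> B \in G -> op_mul A B = op_mul B A) /\
     op_scale (-1) (op_id n) \notin G) /\
    [/\ psi <> (fun _ => 0),
        (forall A, A \in G -> op_apply A psi = psi) &
        (forall phi : state n, (forall A, A \in G -> op_apply A phi = phi) ->
           exists c : C, phi = (fun x => c * psi x))].

Definition LU_equiv n (psi0 psi1 : state n) : Prop :=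
  exists U : 'I_n -> 'M[C]_2, (forall j, unitary2 (U j)) /\ op_apply (tensor U) psi0 = psi1.

Definition LC_equiv n (psi0 psi1 : state n) : Prop :=
  exists U : 'I_n -> 'M[C]_2, (forall j, clifford2 (U j)) /\ op_apply (tensor U) psi0 = psi1.

(* Generators xi^1..xi^6, bit strings with coordinate 1 leftmost. *)
Definition xi_rows : seq (seq nat) :=
  [:: [:: 1;0;0;0;1;0;0;0;1;0;1;0;1;0;1;0;1;0;1;0;0;0;1;1;1;1;0];
      [:: 1;0;1;0;1;0;1;1;1;0;0;1;1;0;0;0;0;0;0;0;1;0;1;0;1;0;1];
      [:: 0;1;1;0;0;1;1;0;0;1;1;1;1;0;0;1;1;1;1;0;0;1;1;0;0;1;1];
      [:: 0;0;0;1;1;1;1;0;0;0;0;0;0;1;1;0;0;1;1;0;0;0;0;1;1;1;1];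
      [:: 0;0;0;0;0;0;0;1;1;1;1;1;1;1;1;0;0;0;0;1;1;1;1;1;1;1;1];
      [:: 0;0;0;0;0;0;0;0;0;0;0;0;0;0;0;1;1;1;1;1;1;1;1;1;1;1;1] ].

(* xi i j = j-th coordinate (0-based) of xi^(i+1). *)
Definition xi (i : 'I_6) (j : 'I_27) : 'I_2 :=
  inZp (nth 0%N (nth [::] xi_rows i) j).

Definition S27 : {set label 27} :=
  [set x : label 27 | [exists c : {ffun 'I_6 -> 'I_2},
                        [forall j : 'I_27, x j == \sum_(i < 6) c i * xi i j]]].

(* Coordinate x_k (1-based, as in the paper). *)
Definition coord (x : label 27) (k : nat) : 'I_2 := x (inZp k.-1).

Definition Q27 (x : label 27) : 'I_2 :=
  let c := coord x in
  c 1%N * c 2%N + c 1%N * c 3%N + c 1%N * c 8%N + c 2%N * c 4%N + c 2%N * c 8%N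
  + c 2%N * c 16%N + c 3%N * c 4%N + c 3%N * c 8%N + c 3%N * c 16%N
  + c 4%N * c 8%N + c 8%N * c 16%N.

Definition ket_S : state 27 :=
  fun x => if x \in S27 then (sqrtC (#|S27|%:R : C))^-1 else 0.

Definition ket_QS : state 27 :=
  fun x => if x \in S27 then (-1) ^+ (nat_of_ord (Q27 x)) * (sqrtC (#|S27|%:R : C))^-1
           else 0.

From Pilot Require Import Defs.
From HB Require Import structures.
From mathcomp Require Import all_boot all_order all_algebra.
From mathcomp Require Import complex Rstruct.
From mathcomp Require Import ring.
From Stdlib Require Import FunctionalExtensionality.
Import Order.TTheory GRing.Theory Num.Theory.
Local Open Scope ring_scope.
Set Implicit Arguments.
Unset Strict Implicit.
Unset Printing Implicit Defensive.

(* Both states are of the form sum_(x in S) (-1)^q(x) |x> with q quadratic with polar map beta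
   (q = 0 or q = Q), hence stabilized by the 2^27 operators +-X(a) Z(beta(a) + h), a in S,
   h in the dual code S^perp.  They are LU equivalent through the diagonal gates
   diag(1, w^a_j), w a primitive eighth root of unity, because sum_j a_j x_j = 4 Q(x) mod 8
   on S.
   If local Cliffords U_j mapped |S> to |Q,S>, conjugating the stabilizers Z(h), h a parity
   check, would give Pauli stabilizers of |Q,S> whose X-part is a codeword inside supp h,
   hence 0; so every U_j Z U_j^* is diagonal and U_j is monomial.  Conjugating X then shows
   that the two entries of U_j differ by a fourth root of unity, so (-1)^Q(x) =
   prod_j h_j^x_j on S with h_j^4 = 1.  This is refuted by codewords x_p and multiplicities
   m_p with sum_p m_p x_p = 0 mod 4 coordinatewise but sum_p m_p Q(x_p) odd. *)

Lemma bit_cases (r : 'I_2) : r = 0 \/ r = 1.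
Proof. by case: r => [[|[|//]] Hr]; [left|right]; apply: val_inj. Qed.

Lemma bit_addrr (t : 'I_2) : t + t = 0.
Proof. by case: (bit_cases t) => ->; apply: val_inj. Qed.

Lemma bit_val_add (a b : 'I_2) : val (a + b) = ((val a + val b) %% 2)%N.
Proof. by []. Qed.

Lemma bit_val_mul (a b : 'I_2) : val (a * b) = ((val a * val b) %% 2)%N.
Proof. by []. Qed.

Lemma bit_val_sum n (F : 'I_n -> 'I_2) :
  val (\sum_(i < n) F i) = ((\sum_(i < n) val (F i)) %% 2)%N.
Proof.
elim: n F => [|n IH] F; first by rewrite !big_ord0.
by rewrite !big_ord_recr bit_val_add IH modnDml.
Qed.

Lemma sum_bit (F : 'I_2 -> C) : \sum_(k < 2) F k = F 0 + F 1.
Proof. by rewrite big_ord_recl big_ord1; congr (F _ + F _); apply: val_inj. Qed.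

Lemma oner_neqN1 : (1 : C) != -1.
Proof.
apply/eqP => H; have: (1 + 1 : C) == 0 by rewrite {2}H subrr.
by rewrite -(natrD C 1 1) pnatr_eq0.
Qed.

Definition sgn (t : 'I_2) : C := (-1) ^+ val t.

Lemma sgn0 : sgn 0 = 1. Proof. by rewrite /sgn expr0. Qed.
Lemma sgn1 : sgn 1 = -1. Proof. by rewrite /sgn expr1. Qed.

Lemma sgnD s t : sgn (s + t) = sgn s * sgn t.
Proof.
rewrite /sgn -exprD; have H : (-1 : C) ^+ 2 = 1 by rewrite expr2 mulrNN mulr1.
by rewrite -(expr_mod _ H).
Qed.

Lemma sgnK t : sgn t * sgn t = 1.
Proof. by rewrite -sgnD bit_addrr sgn0. Qed.

Lemma sgn_neq0 t : sgn t != 0.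
Proof. by rewrite /sgn expf_neq0 // oppr_eq0 oner_eq0. Qed.

Lemma sgn_inj : injective sgn.
Proof.
move=> s t; case: (bit_cases s) (bit_cases t) => -> [] -> //; rewrite sgn0 sgn1.
  by move/eqP; rewrite (negPf oner_neqN1).
by move/esym/eqP; rewrite (negPf oner_neqN1).
Qed.

Lemma sgn_sum n (F : 'I_n -> 'I_2) : sgn (\sum_(j < n) F j) = \prod_(j < n) sgn (F j).
Proof.
elim: n F => [|n IH] F; first by rewrite !big_ord0 sgn0.
by rewrite !big_ord_recr sgnD IH.
Qed.

Section Labels.
Variable n : nat.
Implicit Types x y z u v : label n.

Definition addl x y : label n := [ffun j => x j + y j].
Definition zerol : label n := [ffun _ => 0].
Definition dotl x y : 'I_2 := \sum_(j < n) x j * y j.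

Lemma addlE x y j : addl x y j = x j + y j. Proof. by rewrite ffunE. Qed.
Lemma zerolE j : zerol j = 0. Proof. by rewrite ffunE. Qed.

Lemma addl0 x : addl x zerol = x.
Proof. by apply/ffunP => j; rewrite !ffunE addr0. Qed.

Lemma add0l x : addl zerol x = x.
Proof. by apply/ffunP => j; rewrite !ffunE add0r. Qed.

Lemma addll x : addl x x = zerol.
Proof. by apply/ffunP => j; rewrite !ffunE bit_addrr. Qed.

Lemma addlA x y u : addl x (addl y u) = addl (addl x y) u.
Proof. by apply/ffunP => j; rewrite !ffunE addrA. Qed.

Lemma addlACA x y u v : addl (addl x y) (addl u v) = addl (addl x u) (addl y v).
Proof. by apply/ffunP => j; rewrite !ffunE addrACA. Qed.

Lemma addlKr y x : addl (addl x y) y = x.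
Proof. by rewrite -addlA addll addl0. Qed.

Lemma dot0l y : dotl zerol y = 0.
Proof. by rewrite /dotl big1 // => j _; rewrite ffunE mul0r. Qed.

Lemma dotDl x y w : dotl (addl x y) w = dotl x w + dotl y w.
Proof. by rewrite /dotl -big_split; apply: eq_bigr => j _; rewrite ffunE mulrDl. Qed.

Lemma dotDr w x y : dotl w (addl x y) = dotl w x + dotl w y.
Proof. by rewrite /dotl -big_split; apply: eq_bigr => j _; rewrite ffunE mulrDr. Qed.

Lemma neq_zerol x : x != zerol -> exists j, x j != 0.
Proof.
move=> Hx; apply/existsP; rewrite -negb_forall; apply: contra Hx => /forallP H.
by apply/eqP/ffunP => j; rewrite zerolE; apply/eqP.
Qed.

End Labels.
Arguments zerol {n}.

(* X^a Z^b: the only nonzero entry of row r is (-1)^(b c), in column c = r + a. *)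
Definition pauli_xz (a b : 'I_2) : 'M[C]_2 :=
  \matrix_(r, c) (if c == r + a then sgn (b * c) else 0).

Lemma mulmx2E (A B : 'M[C]_2) r c : (A *m B) r c = A r 0 * B 0 c + A r 1 * B 1 c.
Proof. by rewrite mxE sum_bit. Qed.

Lemma pauli_xz_mul a b a' b' :
  pauli_xz a b *m pauli_xz a' b' = sgn (b * a') *: pauli_xz (a + a') (b + b').
Proof.
apply/matrixP => r c; rewrite !mxE (bigD1 (r + a)) //= big1 ?addr0; last first.
  by move=> k Hk; rewrite !mxE (negPf Hk) mul0r.
rewrite !mxE eqxx -addrA; case: eqP => [->|_]; last by rewrite !mulr0.
rewrite -!sgnD; congr sgn.
transitivity (b * (r + a) + b' * (r + (a + a')) + (b * a' + b * a')).
  by rewrite bit_addrr addr0.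
ring.
Qed.

Lemma pauli_xz00 : pauli_xz 0 0 = 1%:M.
Proof. by apply/matrixP => r c; rewrite !mxE addr0 eq_sym mul0r sgn0; case: eqP. Qed.

Lemma pauli_xz01 : pauli_xz 0 1 = pauliZ.
Proof.
apply/matrixP => r c; rewrite !mxE addr0.
by case: (bit_cases r) => ->; case: (bit_cases c) => -> //=; rewrite mul1r ?sgn0 ?sgn1.
Qed.

Lemma pauli_xz10 : pauli_xz 1 0 = pauliX.
Proof.
apply/matrixP => r c; rewrite !mxE mul0r sgn0.
by case: (bit_cases r) => ->; case: (bit_cases c) => -> /=.
Qed.

Lemma pauli_group1 : pauli_group 1%:M.
Proof.
have ->: (1%:M : 'M[C]_2) = pauli_xz 1 0 *m pauli_xz 1 0.
  by rewrite pauli_xz_mul mul0r sgn0 scale1r bit_addrr addr0 pauli_xz00.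
by rewrite pauli_xz10; apply: pauli_mul; apply: pauli_X.
Qed.

Lemma pauli_group_xz a b : pauli_group (pauli_xz a b).
Proof.
case: (bit_cases a) => ->; case: (bit_cases b) => ->.
- by rewrite pauli_xz00; exact: pauli_group1.
- by rewrite pauli_xz01; exact: pauli_Z.
- by rewrite pauli_xz10; exact: pauli_X.
have ->: pauli_xz 1 1 = pauli_xz 1 0 *m pauli_xz 0 1.
  by rewrite pauli_xz_mul mul0r sgn0 scale1r addr0 add0r.
by rewrite pauli_xz10 pauli_xz01; apply: pauli_mul; [exact: pauli_X|exact: pauli_Z].
Qed.

Lemma pauli_group_sgn t M : pauli_group M -> pauli_group (sgn t *: M).
Proof.
move=> HM; case: (bit_cases t) => ->; first by rewrite sgn0 scale1r.
have ->: sgn 1 *: M = (pauli_xz 1 1 *m pauli_xz 1 1) *m M.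
  by rewrite pauli_xz_mul mul1r sgn1 bit_addrr pauli_xz00 -scalemxAl mul1mx.
by apply: pauli_mul => //; apply: pauli_mul; exact: pauli_group_xz.
Qed.

Section Operators.
Variable n : nat.
Implicit Types (U A B : 'I_n -> 'M[C]_2) (x t a z : label n) (psi : state n).

Lemma op_apply_mul (A B : op n) psi :
  op_apply (op_mul A B) psi = op_apply A (op_apply B psi).
Proof.
apply: functional_extensionality => x; rewrite /op_apply /op_mul.
under eq_bigr => y _ do rewrite !ffunE big_distrl /=.
rewrite exchange_big /=; apply: eq_bigr => y _.
by rewrite big_distrr /=; apply: eq_bigr => z _; rewrite mulrA.
Qed.

Lemma op_apply_scale c (A : op n) psi x :
  op_apply (op_scale c A) psi x = c * op_apply A psi x.
Proof. by rewrite /op_apply big_distrr /=; apply: eq_bigr => y _; rewrite !ffunE mulrA. Qed.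

Lemma op_mul_scale c d (A B : op n) :
  op_mul (op_scale c A) (op_scale d B) = op_scale (c * d) (op_mul A B).
Proof.
apply/ffunP => x; apply/ffunP => z; rewrite !ffunE big_distrr /=.
by apply: eq_bigr => y _; rewrite !ffunE; ring.
Qed.

Lemma op_scale_scale c d (A : op n) : op_scale c (op_scale d A) = op_scale (c * d) A.
Proof. by apply/ffunP => x; apply/ffunP => y; rewrite !ffunE mulrA. Qed.

Lemma op_scale1 (A : op n) : op_scale 1 A = A.
Proof. by apply/ffunP => x; apply/ffunP => y; rewrite !ffunE mul1r. Qed.

Lemma tensor_mul A B : op_mul (tensor A) (tensor B) = tensor (fun j => A j *m B j).
Proof.
apply/ffunP => x; apply/ffunP => z; rewrite /op_mul /tensor !ffunE.
transitivity (\prod_(j < n) \sum_(k < 2) A j (x j) k * B j k (z j)); last first.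
  by apply: eq_bigr => j _; rewrite mxE.
by rewrite bigA_distr_bigA /=; apply: eq_bigr => y _; rewrite !ffunE -big_split.
Qed.

Lemma tensor_scale (s : 'I_n -> C) A :
  tensor (fun j => s j *: A j) = op_scale (\prod_j s j) (tensor A).
Proof.
apply/ffunP => x; apply/ffunP => y; rewrite !ffunE -big_split /=.
by apply: eq_bigr => j _; rewrite mxE.
Qed.

Lemma tensor1 : tensor (fun _ => 1%:M) = op_id n.
Proof.
apply/ffunP => x; apply/ffunP => y; rewrite !ffunE; case: eqP => [->|Hxy].
  by rewrite big1 // => j _; rewrite mxE eqxx.
have [j Hj] : exists j, x j != y j.
  apply/existsP; rewrite -negb_forall; apply/negP => /forallP H.
  by apply: Hxy; apply/ffunP => j; apply/eqP/H.
by rewrite (bigD1 j) //= mxE (negPf Hj) mul0r.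
Qed.

Lemma op_apply_tensor1 psi : op_apply (tensor (fun _ => 1%:M)) psi = psi.
Proof.
apply: functional_extensionality => x; rewrite tensor1 /op_apply (bigD1 x) //=.
rewrite big1 => [|y /negPf Hy]; first by rewrite !ffunE eqxx mul1r addr0.
by rewrite !ffunE eq_sym Hy mul0r.
Qed.

Lemma op_apply_tensor_shift U t psi x :
  (forall j (r c : 'I_2), c != r + t j -> U j r c = 0) ->
  op_apply (tensor U) psi x = (\prod_j U j (x j) (x j + t j)) * psi (addl x t).
Proof.
move=> HU; rewrite /op_apply (bigD1 (addl x t)) //= big1 ?addr0.
  by rewrite /tensor !ffunE; congr (_ * _); apply: eq_bigr => j _; rewrite ffunE.
move=> y Hy; rewrite /tensor !ffunE.
have [j Hj]: exists j, y j != x j + t j.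
  apply/existsP; rewrite -negb_forall; apply: contra Hy => /forallP H.
  by apply/eqP/ffunP => j; rewrite ffunE; apply/eqP/H.
by rewrite (bigD1 j) //= HU // !mul0r.
Qed.

Lemma op_apply_tensor_xz a z psi x :
  op_apply (tensor (fun j => pauli_xz (a j) (z j))) psi x
  = sgn (dotl z (addl x a)) * psi (addl x a).
Proof.
rewrite (@op_apply_tensor_shift _ a) ?sgn_sum => [|j r c]; last by rewrite mxE => /negPf ->.
by congr (_ * _); apply: eq_bigr => j _; rewrite mxE eqxx ffunE; congr sgn; ring.
Qed.

Lemma tensor_xz_mul a z a' z' :
  op_mul (tensor (fun j => pauli_xz (a j) (z j))) (tensor (fun j => pauli_xz (a' j) (z' j)))
  = op_scale (sgn (dotl z a')) (tensor (fun j => pauli_xz (addl a a' j) (addl z z' j))).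
Proof.
rewrite tensor_mul -[dotl z a']/(\sum_j z j * a' j) sgn_sum -tensor_scale.
by congr tensor; apply: functional_extensionality => j; rewrite pauli_xz_mul !ffunE.
Qed.

End Operators.

Lemma tensor_scale_first n c (A : 'I_n.+1 -> 'M[C]_2) :
  tensor (fun j => if j == ord0 then c *: A j else A j) = op_scale c (tensor A).
Proof.
apply/ffunP => x; apply/ffunP => y; rewrite !ffunE (bigD1 ord0) //= [in RHS](bigD1 ord0) //=.
rewrite ?eqxx mxE -mulrA; congr (_ * (_ * _)); apply: eq_bigr => j /negPf Hj.
by rewrite Hj.
Qed.

Definition pauli_monomial (P : 'M[C]_2) := exists s : 'I_2,
  forall r c : 'I_2, if c == r + s then P r c ^+ 4 = 1 else P r c = 0.

Lemma pauli_monomial_mul A B :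
  pauli_monomial A -> pauli_monomial B -> pauli_monomial (A *m B).
Proof.
move=> [s1 HA] [s2 HB]; exists (s1 + s2) => r c; rewrite mxE.
rewrite (bigD1 (r + s1)) //= big1 ?addr0; last first.
  by move=> k Hk; move: (HA r k); rewrite (negPf Hk) => ->; rewrite mul0r.
move: (HA r (r + s1)); rewrite eqxx => HA1; move: (HB (r + s1) c); rewrite -addrA.
by case: (c == r + (s1 + s2)) => [HB1|->]; rewrite ?mulr0 // exprMn HA1 HB1 mulr1.
Qed.

Lemma pauli_group_monomial P : pauli_group P -> pauli_monomial P.
Proof.
have i4 : ('i : C) ^+ 4 = 1 by rewrite (_ : 4 = 2 * 2)%N // exprM sqrCi expr2 mulrNN mulr1.
have m4 : (-1 : C) ^+ 4 = 1 by rewrite -signr_odd.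
elim=> [|||A B _ HA _ HB]; last exact: pauli_monomial_mul.
- exists 1 => r c; rewrite mxE.
  by case: (bit_cases r) => ->; case: (bit_cases c) => -> /=; rewrite ?expr1n.
- exists 1 => r c; rewrite mxE.
  case: (bit_cases r) => ->; case: (bit_cases c) => -> //=.
  by rewrite -mulN1r exprMn i4 mulr1.
- exists 0 => r c; rewrite mxE.
  by case: (bit_cases r) => ->; case: (bit_cases c) => -> //=; rewrite ?expr1n.
Qed.

Lemma unitary2_adjointK U : unitary2 U -> adjoint U *m U = 1%:M.
Proof. exact: mulmx1C. Qed.

Lemma adjointE (U : 'M[C]_2) r c : adjoint U r c = (U c r)^*.
Proof. by rewrite /adjoint !mxE. Qed.

Lemma conjC_eq0 (z : C) : (z^* == 0) = (z == 0).
Proof. by rewrite -normr_eq0 norm_conjC normr_eq0. Qed.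

Definition monomial_shift (U : 'M[C]_2) (t : 'I_2) :=
  forall r c : 'I_2, if c == r + t then U r c != 0 else U r c == 0.

(* A row of U with two nonzero entries would be a left eigenvector of U Z U^* for
   both eigenvalues 1 and -1. *)
Lemma unitary2_diag_conj_monomial U :
  unitary2 U ->
  (forall r c : 'I_2, c != r -> (U *m pauliZ *m adjoint U) r c = 0) ->
  exists t, monomial_shift U t.
Proof.
move=> HU Hd; set W := U *m pauliZ *m adjoint U.
have HWU : W *m U = U *m pauliZ by rewrite /W -mulmxA unitary2_adjointK // mulmx1.
move: Hd; rewrite -/W => Hd; clearbody W.
have row_sparse r : ~ (U r 0 != 0 /\ U r 1 != 0).
  move=> [H0 H1].
  have E c : W r r * U r c = U r c * pauliZ c c.
    move/matrixP: HWU => /(_ r c); rewrite !mxE (bigD1 r) //= big1 ?addr0; last first.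
      by move=> k Hk; rewrite Hd // mul0r.
    move=> ->; rewrite (bigD1 c) //= big1 ?addr0 ?mxE //.
    by move=> k Hk; rewrite mxE (negPf Hk) mulr0.
  move: (E 0) (E 1); rewrite !mxE /= mulr1 mulrN1 => E0 E1.
  have: W r r = 1 by apply: (mulIf H0); rewrite mul1r.
  have: W r r = -1 by apply: (mulIf H1); rewrite mulN1r.
  by move=> -> /eqP; rewrite eq_sym (negPf oner_neqN1).
move/matrixP: HU => HUU.
have row_nonzero r : U r 0 != 0 \/ U r 1 != 0.
  move: (HUU r r); rewrite mulmx2E !adjointE !mxE eqxx /=.
  case: eqVneq => [->|]; last by left.
  case: eqVneq => [->|]; last by right.
  by rewrite !mul0r addr0 => /eqP; rewrite eq_sym oner_eq0.
have rows_orth : U 0 0 * (U 1 0)^* + U 0 1 * (U 1 1)^* = 0.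
  by move: (HUU 0 1); rewrite mulmx2E !adjointE !mxE.
have [h00|h00] := eqVneq (U 0 0) 0.
  have h01 : U 0 1 != 0 by case: (row_nonzero 0) => //; rewrite h00 eqxx.
  have h11 : U 1 1 = 0.
    move: rows_orth; rewrite h00 mul0r add0r => /eqP.
    by rewrite mulf_eq0 (negPf h01) conjC_eq0 => /eqP.
  have h10 : U 1 0 != 0 by case: (row_nonzero 1) => //; rewrite h11 eqxx.
  exists 1 => r c; case: (bit_cases r) => ->; case: (bit_cases c) => -> //=;
    by rewrite ?h00 ?h11 ?h01 ?h10 ?eqxx.
have h01 : U 0 1 = 0 by case: (eqVneq (U 0 1) 0) => // H; case: (row_sparse 0).
have h10 : U 1 0 = 0.
  move: rows_orth; rewrite h01 mul0r addr0 => /eqP.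
  by rewrite mulf_eq0 (negPf h00) conjC_eq0 => /eqP.
have h11 : U 1 1 != 0 by case: (row_nonzero 1) => //; rewrite h10 eqxx.
exists 0 => r c; case: (bit_cases r) => ->; case: (bit_cases c) => -> //=;
  by rewrite ?h00 ?h11 ?h01 ?h10 ?eqxx.
Qed.

(* U X U^* is a monomial Pauli matrix, and (U X U^* ) U = U X swaps the two columns of U. *)
Lemma clifford2_monomial_ratio U t : clifford2 U -> monomial_shift U t ->
  exists w : C, w ^+ 4 = 1 /\ U 0 t = w * U 1 (1 + t).
Proof.
move=> [HU [Hcl _]] Hm.
have [s Hs] := pauli_group_monomial (Hcl _ pauli_X).
set W := U *m pauliX *m adjoint U in Hs.
have HWU : W *m U = U *m pauliX by rewrite /W -mulmxA unitary2_adjointK // mulmx1.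
clearbody W.
have U0t : U 0 t != 0 by have := Hm 0 t; rewrite add0r eqxx.
have U01t : U 0 (1 + t) = 0.
  by apply/eqP; have := Hm 0 (1 + t); case: (bit_cases t) => -> /=.
have Ht : U 0 t = W 0 1 * U 1 (1 + t).
  move/matrixP: HWU => /(_ 0 (1 + t)); rewrite !mulmx2E U01t mulr0 add0r => ->.
  by case: (bit_cases t) => ->; rewrite !mxE /= ?mulr0 ?mulr1 ?add0r ?addr0.
exists (W 0 1); split => //.
have := Hs 0 1; case: (bit_cases s) => -> //= W01.
by move: U0t; rewrite Ht W01 mul0r eqxx.
Qed.

Definition encode (c : {ffun 'I_6 -> 'I_2}) : label 27 :=
  [ffun j => \sum_(i < 6) c i * xi i j].

Lemma in_S27 x : (x \in S27) <-> exists c, x = encode c.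
Proof.
rewrite inE; split.
  move=> /existsP [c /forallP H]; exists c; apply/ffunP => j.
  by rewrite ffunE; apply/eqP/H.
by move=> [c ->]; apply/existsP; exists c; apply/forallP => j; rewrite ffunE.
Qed.

Lemma encode_in c : encode c \in S27.
Proof. by apply/in_S27; exists c. Qed.

Lemma encodeD c c' : addl (encode c) (encode c') = encode [ffun i => c i + c' i].
Proof.
apply/ffunP => j; rewrite !ffunE -big_split /=; apply: eq_bigr => i _.
by rewrite ffunE mulrDl.
Qed.

Lemma encode0 : encode [ffun _ => 0] = zerol.
Proof. by apply/ffunP => j; rewrite !ffunE big1 // => i _; rewrite ffunE mul0r. Qed.

Lemma S27_0 : zerol \in S27.
Proof. by rewrite -encode0 encode_in. Qed.

Lemma S27_add x y : x \in S27 -> y \in S27 -> addl x y \in S27.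
Proof. by move=> /in_S27 [c ->] /in_S27 [c' ->]; rewrite encodeD encode_in. Qed.

Lemma S27_addr x y : y \in S27 -> (addl x y \in S27) = (x \in S27).
Proof.
move=> Hy; apply/idP/idP => [Hxy|Hx]; last exact: S27_add.
by rewrite -(addlKr y x) S27_add.
Qed.

(* Computable mirrors over nat of the bit-level objects, on which the finite facts
   about S below are decided by evaluation. *)
Definition xi_entryN (i j : nat) : nat := nth 0%N (nth [::] xi_rows i) j.

Definition encodeN (bs : seq nat) (j : nat) : nat :=
  ((\sum_(0 <= k < 6) nth 0%N bs k * xi_entryN k j) %% 2)%N.

Definition bits_of (c : {ffun 'I_6 -> 'I_2}) : seq nat :=
  [seq val (c (inZp k)) | k <- iota 0 6].

Fixpoint bit_seqs (n : nat) : seq (seq nat) :=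
  if n is m.+1 then [seq 0%N :: l | l <- bit_seqs m] ++ [seq 1%N :: l | l <- bit_seqs m]
  else [:: [::]].

Definition Q27N (v : nat -> nat) : nat :=
  let c k := v k.-1 in
  ((((((((((((c 1 * c 2) %% 2 + (c 1 * c 3) %% 2) %% 2 + (c 1 * c 8) %% 2) %% 2
  + (c 2 * c 4) %% 2) %% 2 + (c 2 * c 8) %% 2) %% 2
  + (c 2 * c 16) %% 2) %% 2 + (c 3 * c 4) %% 2) %% 2 + (c 3 * c 8) %% 2) %% 2
  + (c 3 * c 16) %% 2) %% 2
  + (c 4 * c 8) %% 2) %% 2 + (c 8 * c 16) %% 2) %% 2)%N.

Lemma val_Q27 x : val (Q27 x) = Q27N (fun k => val (x (inZp k))).
Proof. by []. Qed.

Lemma Q27N_ext v w : v =1 w -> Q27N v = Q27N w.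
Proof. by move=> H; rewrite /Q27N !H. Qed.

Lemma xi_entryN_lt2 i j : (xi_entryN i j < 2)%N.
Proof.
have Hrows : all (all (fun b => b < 2)%N) xi_rows by [].
rewrite /xi_entryN; have [Hi|Hi] := ltnP i (size xi_rows); last first.
  by rewrite (nth_default [::] Hi) nth_nil.
have Hr := allP Hrows _ (mem_nth [::] Hi).
have [Hj|Hj] := ltnP j (size (nth [::] xi_rows i)); last by rewrite nth_default.
exact: (allP Hr _ (mem_nth 0%N Hj)).
Qed.

Lemma val_encode c j : val (encode c j) = encodeN (bits_of c) (val j).
Proof.
rewrite ffunE bit_val_sum /encodeN big_mkord; congr (_ %% 2)%N.
apply: eq_bigr => i _; rewrite bit_val_mul /bits_of (nth_map 0%N) ?size_iota //.
rewrite nth_iota // add0n.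
have ->: (inZp i : 'I_6) = i by apply: val_inj; rewrite /= modn_small.
have ->: val (xi i j) = xi_entryN i j by rewrite /= modn_small // xi_entryN_lt2.
rewrite modn_small //; have := xi_entryN_lt2 i j.
by case: (xi_entryN i j) => [|[|//]] _; case: (c i) => [[|[|//]] ?].
Qed.

Lemma bit_seqs_complete n (l : seq nat) :
  size l = n -> all (fun b => b < 2)%N l -> l \in bit_seqs n.
Proof.
elim: n l => [|n IH] [|b l] //= [Hs] /andP [Hb Hl].
rewrite mem_cat; case: b Hb => [|[|//]] _; last rewrite orbC.
all: by rewrite mem_map ?IH // => x y [].
Qed.

Lemma bits_of_in c : bits_of c \in bit_seqs 6.
Proof.
apply: bit_seqs_complete; first by rewrite size_map size_iota.
by apply/allP => b /mapP [k _ ->]; exact: ltn_ord.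
Qed.

Lemma nth_bits_of c (i : 'I_6) : nth 0%N (bits_of c) i = val (c i).
Proof.
rewrite /bits_of (nth_map 0%N) ?size_iota // nth_iota // add0n.
by congr (val (c _)); apply: val_inj; rewrite /= modn_small.
Qed.

Lemma encode_inj : injective encode.
Proof.
have decide : all (fun bs => all (fun bs' =>
    all (fun j => encodeN bs j == encodeN bs' j) (iota 0 27) ==> (bs == bs'))
    (bit_seqs 6)) (bit_seqs 6).
  by rewrite /encodeN unlock; vm_compute.
move=> c c' E.
have Hb : bits_of c = bits_of c'.
  apply/eqP; apply: (implyP (allP (allP decide _ (bits_of_in c)) _ (bits_of_in c'))).
  apply/allP => j; rewrite mem_iota /= => Hj.
  by rewrite -(val_encode c (Ordinal Hj)) -(val_encode c' (Ordinal Hj)) E.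
by apply/ffunP => i; apply: val_inj; rewrite -!nth_bits_of Hb.
Qed.

(* Coordinates 1, 2, 4, 8, 16, 20 form an information set of S.  The parity check
   [check_vec k] is 1 at the k-th remaining coordinate p, 0 at the other remaining ones,
   and its value at the m-th information coordinate is entry p of row m of [check_data]. *)
Definition info_coords : seq nat := [:: 0; 1; 3; 7; 15; 19]%N.
Definition check_coords : seq nat :=
  [:: 2; 4; 5; 6; 8; 9; 10; 11; 12; 13; 14; 16; 17; 18; 20; 21; 22; 23; 24; 25; 26]%N.
Definition check_data : seq (seq nat) :=
  [:: [:: 1;0;0;0;1;0;0;0;1;0;1;0;1;0;1;0;1;0;1;0;0;0;1;1;1;1;0];
      [:: 0;1;0;0;0;1;0;0;1;0;1;1;0;1;0;0;1;0;1;0;1;1;1;1;0;0;0];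
      [:: 0;0;0;1;1;1;1;0;0;0;0;0;0;1;1;0;0;1;1;0;0;0;0;1;1;1;1];
      [:: 0;0;1;0;0;0;1;1;0;0;1;1;0;0;1;0;1;0;1;0;1;0;0;1;0;1;1];
      [:: 0;0;1;0;0;0;1;0;1;1;0;0;1;1;0;1;0;1;0;0;1;0;0;1;0;1;1];
      [:: 0;0;1;0;0;0;1;0;1;1;0;0;1;1;0;0;1;0;1;1;0;1;1;0;1;0;0] ]%N.

Definition checkN (p j : nat) : nat :=
  if j == p then 1%N
  else if j \in info_coords then nth 0%N (nth [::] check_data (index j info_coords)) p
  else 0%N.

Definition check_vec (k : 'I_21) : label 27 :=
  [ffun j => inZp (checkN (nth 0%N check_coords k) (val j))].

Definition check_pos (k : 'I_21) : 'I_27 := inZp (nth 0%N check_coords k).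

Definition info_pos (m : 'I_6) : 'I_27 := inZp (nth 0%N info_coords m).

Lemma val_check_vec k j : val (check_vec k j) = (checkN (nth 0%N check_coords k) (val j) %% 2)%N.
Proof. by rewrite ffunE. Qed.

Lemma mem_iota_ord n (k : 'I_n) : val k \in iota 0 n.
Proof. by rewrite mem_iota ltn_ord. Qed.

Lemma val_dotl27 (x y : label 27) (f g : nat -> nat) :
  (forall j, val (x j) = f (val j)) -> (forall j, val (y j) = g (val j)) ->
  val (dotl x y) = ((\sum_(0 <= j < 27) f j * g j) %% 2)%N.
Proof.
move=> Hx Hy; rewrite /dotl bit_val_sum.
have -> : (\sum_(j < 27) val (x j * y j)%R = \sum_(j < 27) (f j * g j) %% 2)%N.
  by apply: eq_bigr => j _; rewrite -Hx -Hy.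
by rewrite -modn_summ big_mkord.
Qed.

Lemma check_vec_orth k x : x \in S27 -> dotl (check_vec k) x = 0.
Proof.
have decide : all (fun bs => all (fun k =>
    ((\sum_(0 <= j < 27) (checkN (nth 0%N check_coords k) j %% 2) * encodeN bs j) %% 2
      == 0)%N) (iota 0 21)) (bit_seqs 6).
  by rewrite /encodeN unlock; vm_compute.
move=> /in_S27 [c ->]; apply: val_inj.
rewrite (@val_dotl27 _ _ (fun j => checkN (nth 0%N check_coords k) j %% 2)%N _
  (val_check_vec k) (val_encode c)).
by apply/eqP; apply: (allP (allP decide _ (bits_of_in c))); exact: mem_iota_ord.
Qed.

Lemma val_check_pos k : val (check_pos k) = nth 0%N check_coords k.
Proof.
have Hlt : all (fun k => nth 0%N check_coords k < 27)%N (iota 0 21) by [].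
by rewrite /= modn_small // (allP Hlt _ (mem_iota_ord k)).
Qed.

Lemma check_vec_pos k k' : check_vec k' (check_pos k) = if k == k' then 1 else 0.
Proof.
have decide : all (fun k => all (fun k' =>
    (checkN (nth 0%N check_coords k') (nth 0%N check_coords k) %% 2 == (k == k'))%N)
    (iota 0 21)) (iota 0 21) by vm_compute.
apply: val_inj; rewrite val_check_vec val_check_pos.
rewrite (eqP (allP (allP decide _ (mem_iota_ord k)) _ (mem_iota_ord k'))).
by rewrite val_eqE; case: eqP.
Qed.

Lemma check_vec_cover j : exists k, check_vec k j = 1.
Proof.
have decide : all (fun j => has (fun k => checkN (nth 0%N check_coords k) j %% 2 == 1)%N
  (iota 0 21)) (iota 0 27) by vm_compute.
have /hasP [k Hk /eqP Hv] := allP decide _ (mem_iota_ord j).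
have Hk' : (k < 21)%N by move: Hk; rewrite mem_iota.
by exists (Ordinal Hk'); apply: val_inj; rewrite val_check_vec.
Qed.

Lemma S27_check_support k x :
  x \in S27 -> (forall j, check_vec k j = 0 -> x j = 0) -> x = zerol.
Proof.
have decide : all (fun bs => all (fun k =>
    all (fun j => (checkN (nth 0%N check_coords k) j %% 2 == 0)%N ==> (encodeN bs j == 0%N))
      (iota 0 27)
    ==> all (fun j => encodeN bs j == 0%N) (iota 0 27)) (iota 0 21)) (bit_seqs 6).
  by rewrite /encodeN unlock; vm_compute.
move=> /in_S27 [c ->] Hsupp.
have := allP (allP decide _ (bits_of_in c)) _ (mem_iota_ord k) => /implyP H.
have /allP Hzero : all (fun j => encodeN (bits_of c) j == 0%N) (iota 0 27).
  apply: H; apply/allP => j; rewrite mem_iota /= => Hj; apply/implyP => Hk.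
  rewrite -(val_encode c (Ordinal Hj)) Hsupp //.
  by apply: val_inj; rewrite val_check_vec; apply/eqP.
by apply/ffunP => j; apply: val_inj; rewrite val_encode zerolE; apply/eqP/Hzero/mem_iota_ord.
Qed.

Lemma coord_info_or_check (j : 'I_27) :
  (exists m, j = info_pos m) \/ (exists k, j = check_pos k).
Proof.
have decide : all (fun j => (j \in info_coords) || (j \in check_coords)) (iota 0 27).
  by vm_compute.
case/orP: (allP decide _ (mem_iota_ord j)) => Hj; [left|right].
  have Hm : (index (val j) info_coords < 6)%N by rewrite -[6%N]/(size info_coords) index_mem.
  exists (Ordinal Hm); apply: val_inj; rewrite /info_pos /= nth_index //.
  by rewrite modn_small ?ltn_ord.
have Hk : (index (val j) check_coords < 21)%N by rewrite -[21%N]/(size check_coords) index_mem.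
by exists (Ordinal Hk); apply: val_inj; rewrite val_check_pos nth_index.
Qed.

Definition coeffs_of (bs : seq nat) : {ffun 'I_6 -> 'I_2} :=
  [ffun i : 'I_6 => inZp (nth 0%N bs (val i))].

Lemma S27_info_complete (x : label 27) : exists2 y, y \in S27 & forall m, addl x y (info_pos m) = 0.
Proof.
have decide : all (fun v => has (fun bs => all (fun m =>
    encodeN [seq (nth 0%N bs k %% 2)%N | k <- iota 0 6] (nth 0%N info_coords m)
      == nth 0%N v m) (iota 0 6)) (bit_seqs 6)) (bit_seqs 6).
  by rewrite /encodeN unlock; vm_compute.
pose v := [seq val (x (info_pos (inZp m))) | m <- iota 0 6].
have Hv : v \in bit_seqs 6.
  apply: bit_seqs_complete; first by rewrite size_map size_iota.
  by apply/allP => b /mapP [m _ ->]; exact: ltn_ord.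
have /hasP [bs _ /allP Hbs] := allP decide _ Hv.
exists (encode (coeffs_of bs)); first exact: encode_in.
have Hbits : bits_of (coeffs_of bs) = [seq (nth 0%N bs k %% 2)%N | k <- iota 0 6].
  apply/eq_in_map => k; rewrite mem_iota => /andP [_ Hk].
  by rewrite ffunE /= (modn_small Hk).
have Hlt : all (fun m => nth 0%N info_coords m < 27)%N (iota 0 6) by [].
move=> m; apply: val_inj; rewrite addlE bit_val_add val_encode Hbits /=.
rewrite (modn_small (allP Hlt _ (mem_iota_ord m))) (eqP (Hbs m (mem_iota_ord m))).
rewrite /v (nth_map 0%N) ?size_iota // nth_iota // add0n.
have -> : (inZp m : 'I_6) = m by apply: val_inj; rewrite /= modn_small.
by rewrite addnn -muln2 modnMl.
Qed.

Lemma dot_check_vec_info k (w : label 27) :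
  (forall m, w (info_pos m) = 0) -> dotl (check_vec k) w = w (check_pos k).
Proof.
move=> Hw; rewrite /dotl (bigD1 (check_pos k)) //= check_vec_pos eqxx mul1r.
rewrite big1 ?addr0 // => i Hi.
case: (coord_info_or_check i) => [[m ->]|[k' Ek']]; first by rewrite Hw mulr0.
rewrite Ek' check_vec_pos; case: eqP => [Ekk|]; last by rewrite mul0r.
by move: Hi; rewrite Ek' Ekk eqxx.
Qed.

Definition ket_norm : C := (sqrtC (#|S27|%:R : C))^-1.

Lemma ket_norm_neq0 : ket_norm != 0.
Proof.
rewrite /ket_norm invr_eq0 sqrtC_eq0 pnatr_eq0 -lt0n.
by apply/card_gt0P; exists zerol; exact: S27_0.
Qed.

Definition quad_ket (q : label 27 -> 'I_2) : state 27 :=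
  fun x => if x \in S27 then sgn (q x) * ket_norm else 0.

Lemma ket_S_quad : ket_S = quad_ket (fun _ => 0).
Proof. by apply: functional_extensionality => x; rewrite /quad_ket sgn0 mul1r. Qed.

Lemma ket_QS_quad : ket_QS = quad_ket Q27.
Proof. by []. Qed.

Definition polar_form (q : label 27 -> 'I_2) (beta : label 27 -> label 27) :=
  [/\ forall x y, q (addl x y) = q x + q y + dotl (beta x) y,
      forall x y, beta (addl x y) = addl (beta x) (beta y),
      forall x, dotl (beta x) x = 0 &
      forall x y, dotl (beta x) y = dotl (beta y) x].

Section QuadraticStabilizer.
Variables (q : label 27 -> 'I_2) (beta : label 27 -> label 27).
Hypothesis polar : polar_form q beta.

Lemma polar_q0 : q zerol = 0.
Proof.
have [Hq _ Hbb _] := polar; have := Hq zerol zerol; rewrite addll Hbb addr0.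
by move/eqP; rewrite -{1}(addr0 (q zerol)) (inj_eq (addrI _)) eq_sym => /eqP.
Qed.

Lemma polar_beta0 : beta zerol = zerol.
Proof.
have [_ Hb _ _] := polar; have := Hb zerol zerol; rewrite addll => /ffunP H.
apply/ffunP => j; move: (H j); rewrite !ffunE => /eqP.
by rewrite -{1}(addr0 (beta zerol j)) (inj_eq (addrI _)) eq_sym => /eqP.
Qed.

Definition stab_index := ({ffun 'I_6 -> 'I_2} * {ffun 'I_21 -> 'I_2})%type.

Definition index_add (p p' : stab_index) : stab_index :=
  ([ffun i => p.1 i + p'.1 i], [ffun k => p.2 k + p'.2 k]).

Definition index0 : stab_index := ([ffun _ => 0], [ffun _ => 0]).

Definition dual_word (d : {ffun 'I_21 -> 'I_2}) : label 27 :=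
  [ffun j => \sum_(k < 21) d k * check_vec k j].

Definition stab_z (p : stab_index) : label 27 := addl (dual_word p.2) (beta (encode p.1)).

(* The element of the stabilizer group of [quad_ket q] with X-part [encode p.1]:
   up to the sign (-1)^(q a) (carried by the first tensor factor) it is X(a) Z(beta a + h)
   with h in the dual code. *)
Definition stab_op (p : stab_index) : op 27 :=
  tensor (fun j => if j == ord0 then sgn (q (encode p.1)) *: pauli_xz (encode p.1 j) (stab_z p j)
                   else pauli_xz (encode p.1 j) (stab_z p j)).

Lemma stab_opE p : stab_op p =
  op_scale (sgn (q (encode p.1))) (tensor (fun j => pauli_xz (encode p.1 j) (stab_z p j))).
Proof. exact: (@tensor_scale_first 26). Qed.

Lemma stab_op_entry p x y : stab_op p x y =
  sgn (q (encode p.1)) * \prod_j pauli_xz (encode p.1 j) (stab_z p j) (x j) (y j).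
Proof. by rewrite stab_opE !ffunE. Qed.

Lemma stab_op_apply p (psi : state 27) x :
  op_apply (stab_op p) psi x = sgn (q (encode p.1)) *
    (sgn (dotl (stab_z p) (addl x (encode p.1))) * psi (addl x (encode p.1))).
Proof. by rewrite stab_opE op_apply_scale op_apply_tensor_xz. Qed.

Lemma dual_wordD d d' : addl (dual_word d) (dual_word d') = dual_word [ffun k => d k + d' k].
Proof.
apply/ffunP => j; rewrite !ffunE -big_split /=; apply: eq_bigr => k _.
by rewrite [in RHS]ffunE mulrDl.
Qed.

Lemma dual_word0 : dual_word [ffun _ => 0] = zerol.
Proof. by apply/ffunP => j; rewrite !ffunE big1 // => k _; rewrite ffunE mul0r. Qed.

Lemma dual_word_orth d x : x \in S27 -> dotl (dual_word d) x = 0.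
Proof.
move=> Hx; rewrite /dotl; under eq_bigr => j _ do rewrite ffunE mulr_suml.
rewrite exchange_big /= big1 // => k _.
transitivity (d k * dotl (check_vec k) x); last by rewrite check_vec_orth // mulr0.
by rewrite /dotl big_distrr /=; apply: eq_bigr => j _; rewrite mulrA.
Qed.

Lemma dual_word_pos d k : dual_word d (check_pos k) = d k.
Proof.
rewrite ffunE (bigD1 k) //= check_vec_pos eqxx mulr1 big1 ?addr0 // => k' Hk'.
by rewrite check_vec_pos eq_sym (negPf Hk') mulr0.
Qed.

Lemma dual_word_inj : injective dual_word.
Proof. by move=> d d' E; apply/ffunP => k; rewrite -!dual_word_pos E. Qed.

Lemma dual_word_unit k : dual_word [ffun k' => if k' == k then 1 else 0] = check_vec k.
Proof.
apply/ffunP => j; rewrite ffunE (bigD1 k) //= ffunE eqxx mul1r big1 ?addr0 // => k' Hk'.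
by rewrite ffunE (negPf Hk') mul0r.
Qed.

Lemma stab_op_mul p p' : op_mul (stab_op p) (stab_op p') = stab_op (index_add p p').
Proof.
have [Hq Hb _ _] := polar.
rewrite !stab_opE op_mul_scale tensor_xz_mul op_scale_scale.
have Ea : encode (index_add p p').1 = addl (encode p.1) (encode p'.1) by rewrite encodeD.
have Ez : stab_z (index_add p p') = addl (stab_z p) (stab_z p').
  by rewrite /stab_z Ea Hb /= -dual_wordD addlACA.
rewrite Ez Ea Hq /stab_z dotDl dual_word_orth ?encode_in // add0r !sgnD.
by congr op_scale; ring.
Qed.

Lemma stab_op0 : stab_op index0 = op_id 27.
Proof.
rewrite stab_opE /= encode0 polar_q0 sgn0 op_scale1 /stab_z /= dual_word0 encode0 polar_beta0.
rewrite addll -tensor1; congr tensor; apply: functional_extensionality => j.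
by rewrite ffunE pauli_xz00.
Qed.

Lemma index_add_self p : index_add p p = index0.
Proof. by congr pair; apply/ffunP => i; rewrite !ffunE bit_addrr. Qed.

Lemma index_addC p p' : index_add p p' = index_add p' p.
Proof. by congr pair; apply/ffunP => i; rewrite !ffunE addrC. Qed.

Lemma stab_op_pauli p : pauli_n (stab_op p).
Proof.
exists (fun j => if j == ord0 then sgn (q (encode p.1)) *: pauli_xz (encode p.1 j) (stab_z p j)
                 else pauli_xz (encode p.1 j) (stab_z p j)); split => // j.
by case: ifP => _; [apply: pauli_group_sgn|]; exact: pauli_group_xz.
Qed.

Lemma stab_op_fix p : op_apply (stab_op p) (quad_ket q) = quad_ket q.
Proof.
have [Hq Hb Hbb Hsym] := polar.
apply: functional_extensionality => x; rewrite stab_op_apply /quad_ket.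
set a := encode p.1; have Ha : a \in S27 by exact: encode_in.
rewrite (S27_addr _ Ha); case: ifP => Hx; last by rewrite !mulr0.
rewrite Hq /stab_z dotDl dual_word_orth ?S27_add // add0r dotDr Hbb addr0 (Hsym a x) !sgnD.
transitivity (sgn (q x) * ket_norm *
  ((sgn (q a) * sgn (q a)) * (sgn (dotl (beta x) a) * sgn (dotl (beta x) a)))); first ring.
by rewrite !sgnK !mulr1.
Qed.

Lemma stab_op_inj : injective stab_op.
Proof.
move=> [c d] [c' d'] E; set a := encode c; set a' := encode c'.
have Ea : a = a'.
  apply/eqP/negPn/negP => Hn.
  have [j Hj] : exists j, a j != a' j.
    apply/existsP; rewrite -negb_forall; apply: contra Hn => /forallP H.
    by apply/eqP/ffunP => j; apply/eqP/H.
  move/ffunP: E => /(_ zerol) /ffunP /(_ a); rewrite !stab_op_entry /= -/a -/a'.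
  rewrite [in X in _ = X](bigD1 j) //= mxE zerolE add0r (negPf Hj) mul0r mulr0.
  move/eqP; rewrite mulf_eq0 (negPf (sgn_neq0 _)) /= prodf_seq_eq0 => /hasP [i _].
  by rewrite mxE zerolE add0r eqxx (negPf (sgn_neq0 _)).
have Ez : stab_z (c, d) = stab_z (c', d').
  apply/ffunP => j; apply: sgn_inj.
  pose ej : label 27 := [ffun i => if i == j then 1 else 0].
  have dot_ej (z : label 27) : sgn (dotl z ej) = \prod_i pauli_xz (a i) (z i) (addl ej a i) (ej i).
    rewrite sgn_sum; apply: eq_bigr => i _.
    by rewrite mxE addlE -addrA bit_addrr addr0 eqxx.
  have {}dot_ej (z : label 27) : sgn (z j) = \prod_i pauli_xz (a i) (z i) (addl ej a i) (ej i).
    rewrite -(dot_ej z) /dotl (bigD1 j) //= ffunE eqxx mulr1 big1 ?addr0 // => i Hi.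
    by rewrite ffunE (negPf Hi) mulr0.
  move/ffunP: E => /(_ (addl ej a)) /ffunP /(_ ej); rewrite !stab_op_entry /= -/a -/a' -Ea.
  by move/(mulfI (sgn_neq0 _)); rewrite !dot_ej.
have Ed : dual_word d = dual_word d'.
  move: Ez; rewrite /stab_z /= -/a -/a' -Ea.
  by move=> /(congr1 (fun z => addl z (beta a))); rewrite !addlKr.
by rewrite (encode_inj Ea) (dual_word_inj Ed).
Qed.

Lemma stab_op_neq_negI p : stab_op p != op_scale (-1) (op_id 27).
Proof.
apply/eqP => /ffunP /(_ zerol) /ffunP /(_ zerol).
rewrite stab_op_entry !ffunE eqxx mulr1.
have [Ha|/neq_zerol [j Hj]] := eqVneq (encode p.1) zerol.
  rewrite Ha polar_q0 sgn0 mul1r big1 => [/eqP|j _]; first by rewrite (negPf oner_neqN1).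
  by rewrite mxE !ffunE addr0 eqxx mulr0 sgn0.
rewrite (bigD1 j) //= mxE zerolE add0r eq_sym (negPf Hj) mul0r mulr0 => /eqP.
by rewrite eq_sym oppr_eq0 oner_eq0.
Qed.

Section FixedVector.
Variable phi : state 27.
Hypothesis phi_fixed : forall p, op_apply (stab_op p) phi = phi.

Let phi_shift p y : phi y = sgn (q (encode p.1)) *
  (sgn (dotl (stab_z p) (addl y (encode p.1))) * phi (addl y (encode p.1))).
Proof. by rewrite -stab_op_apply phi_fixed. Qed.

Lemma fixed_on_S x : x \in S27 -> phi x = sgn (q x) * phi zerol.
Proof.
have [_ _ Hbb _] := polar; move=> /in_S27 [c Ex].
have := phi_shift (c, [ffun _ => 0]) zerol.
rewrite /stab_z /= dual_word0 add0l -Ex add0l Hbb sgn0 mul1r => ->.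
by rewrite mulrA sgnK mul1r.
Qed.

(* The Z-type stabilizers Z(h), h dual, flip the sign at any w outside S once w
   vanishes on the information set. *)
Lemma fixed_off_S_info w : w \notin S27 -> (forall m, w (info_pos m) = 0) -> phi w = 0.
Proof.
move=> HwS Hw; have /neq_zerol [j Hj] : w != zerol.
  by apply: contraNneq HwS => ->; exact: S27_0.
have [[m Em]|[k Ek]] := coord_info_or_check j; first by move: Hj; rewrite Em Hw eqxx.
have := phi_shift ([ffun _ => 0], [ffun k' => if k' == k then 1 else 0]) w.
rewrite /stab_z /= encode0 polar_q0 sgn0 mul1r addl0 dual_word_unit polar_beta0 addl0.
rewrite dot_check_vec_info // -Ek.
have -> : w j = 1 by case: (bit_cases (w j)) Hj => ->.
rewrite sgn1 mulN1r => /eqP; rewrite -addr_eq0 -mulr2n mulrn_eq0 /= => /eqP //.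
Qed.

Lemma fixed_off_S x : x \notin S27 -> phi x = 0.
Proof.
move=> Hx; have [y Hy Hw] := S27_info_complete x.
have [c Ey] := (in_S27 y).1 Hy.
rewrite (phi_shift (c, [ffun _ => 0]) x) /= -Ey fixed_off_S_info ?mulr0 //.
by rewrite S27_addr.
Qed.

Lemma fixed_vector_multiple : exists c : C, phi = (fun x => c * quad_ket q x).
Proof.
exists (phi zerol / ket_norm); apply: functional_extensionality => x; rewrite /quad_ket.
case: ifPn => Hx; last by rewrite mulr0 fixed_off_S.
by rewrite fixed_on_S // mulrCA -mulrA mulVf ?ket_norm_neq0 // mulr1 mulrC.
Qed.

End FixedVector.

Lemma stabilizer_state_quad_ket : stabilizer_state (quad_ket q).
Proof.
exists (map stab_op (enum {: stab_index})); split.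
  split; [|split; [|split; [|split; [|split; [|split; [|split]]]]]].
- by rewrite map_inj_uniq ?enum_uniq //; exact: stab_op_inj.
- rewrite size_map -cardE card_prod !card_ffun !card_ord -expnD //.
- by move=> A /mapP [p _ ->]; exact: stab_op_pauli.
- by apply/mapP; exists index0; rewrite ?mem_enum // stab_op0.
- move=> A B /mapP [p _ ->] /mapP [p' _ ->]; rewrite stab_op_mul.
  by apply/mapP; exists (index_add p p'); rewrite ?mem_enum.
- move=> A /mapP [p _ ->]; exists (stab_op p); first by apply/mapP; exists p; rewrite ?mem_enum.
  by rewrite stab_op_mul index_add_self stab_op0.
- by move=> A B /mapP [p _ ->] /mapP [p' _ ->]; rewrite !stab_op_mul index_addC.
- by apply/mapP => [[p _ /esym H]]; move: (stab_op_neq_negI p); rewrite H eqxx.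
split.
- move=> /(congr1 (fun f => f zerol)); rewrite /quad_ket /= S27_0 polar_q0 sgn0 mul1r.
  by move/eqP; rewrite (negPf ket_norm_neq0).
- by move=> A /mapP [p _ ->]; exact: stab_op_fix.
- move=> phi Hphi; apply: fixed_vector_multiple => p; apply: Hphi.
  by apply/mapP; exists p; rewrite ?mem_enum.
Qed.

End QuadraticStabilizer.

(* The weights a_j of the diagonal gates diag(1, w^a_j), w a primitive eighth root of unity;
   they satisfy sum_j a_j x_j = 4 Q(x) mod 8 on S. *)
Definition lu_weights : seq nat :=
  [:: 7; 3; 3; 5; 3; 3; 3; 1; 3; 3; 1; 3; 1; 1; 1; 7; 3; 3; 1; 1; 1; 3; 1; 1; 1; 1; 1]%N.

Lemma lu_weights_Q x : x \in S27 ->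
  ((\sum_(j < 27) nth 0%N lu_weights j * val (x j)) %% 8 = 4 * val (Q27 x))%N.
Proof.
have decide : all (fun bs => ((\sum_(0 <= j < 27) nth 0%N lu_weights j * encodeN bs j) %% 8
    == 4 * Q27N (fun k => encodeN bs (k %% 27)))%N) (bit_seqs 6).
  by rewrite /encodeN unlock; vm_compute.
move=> /in_S27 [c ->].
have -> : (\sum_(j < 27) nth 0%N lu_weights j * val (encode c j))%N =
          (\sum_(0 <= j < 27) nth 0%N lu_weights j * encodeN (bits_of c) j)%N.
  by rewrite big_mkord; apply: eq_bigr => j _; rewrite val_encode.
rewrite (eqP (allP decide _ (bits_of_in c))) val_Q27; congr (4 * _)%N.
by apply: Q27N_ext => k; rewrite val_encode.
Qed.

Definition omega8 : C := sqrtC 'i.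

Lemma omega8_4 : omega8 ^+ 4 = -1.
Proof. by rewrite (_ : 4 = 2 * 2)%N // exprM sqrtCK sqrCi. Qed.

Lemma omega8_8 : omega8 ^+ 8 = 1.
Proof. by rewrite (_ : 8 = 4 * 2)%N // exprM omega8_4 expr2 mulrNN mulr1. Qed.

Lemma omega8_unit k : omega8 ^+ k * (omega8 ^+ k)^* = 1.
Proof.
rewrite rmorphXn -exprMn -normCK; have: `|omega8| ^+ 2 = `|omega8 ^+ 2| by rewrite normrX.
by rewrite sqrtCK normCi => ->; rewrite !expr1n.
Qed.

Definition phase_gate (e : C) : 'M[C]_2 :=
  \matrix_(r, c) (if c == r then (if r == 0 then 1 else e) else 0).

Lemma phase_gate_unitary e : e * e^* = 1 -> unitary2 (phase_gate e).
Proof.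
move=> He; apply/matrixP => r c; rewrite /adjoint mulmx2E !mxE.
by case: (bit_cases r) => ->; case: (bit_cases c) => -> /=;
  rewrite ?mulr0 ?mul0r ?addr0 ?add0r ?rmorph0 ?rmorph1 ?mul1r ?mulr0 ?mul0r ?addr0 ?add0r ?He.
Qed.

Theorem LU_equiv_S_QS : LU_equiv ket_S ket_QS.
Proof.
exists (fun j => phase_gate (omega8 ^+ nth 0%N lu_weights j)); split.
  by move=> j; apply: phase_gate_unitary; exact: omega8_unit.
apply: functional_extensionality => x.
rewrite (@op_apply_tensor_shift _ _ zerol); last first.
  by move=> j r c; rewrite ffunE addr0 mxE => /negPf ->.
rewrite addl0 ket_S_quad ket_QS_quad /quad_ket; case: ifP => Hx; last by rewrite mulr0.
rewrite sgn0 mul1r; congr (_ * _).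
have -> : \prod_(j < 27) phase_gate (omega8 ^+ nth 0%N lu_weights j) (x j) (x j + zerol j) =
          \prod_(j < 27) omega8 ^+ (nth 0%N lu_weights j * val (x j)).
  apply: eq_bigr => j _; rewrite ffunE addr0 mxE eqxx.
  by case: (bit_cases (x j)) => -> /=; rewrite ?muln0 ?expr0 ?muln1.
by rewrite prodrXr -(expr_mod _ omega8_8) lu_weights_Q // exprM omega8_4.
Qed.

(* Neighbours of each (0-based) coordinate in the graph whose edges are the monomials of Q. *)
Definition Q27_adj (j : nat) : seq nat :=
  match j with
  | 0 => [:: 1; 2; 7]
  | 1 => [:: 0; 3; 7; 15]
  | 2 => [:: 0; 3; 7; 15]
  | 3 => [:: 1; 2; 7]
  | 7 => [:: 0; 1; 2; 3; 15]
  | 15 => [:: 1; 2; 7]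
  | _ => [::]
  end%N.

Definition Q27_polar (x : label 27) : label 27 :=
  [ffun j : 'I_27 => \sum_(k <- Q27_adj (val j)) x (inZp k)].

Lemma dot_Q27_polar x y : dotl (Q27_polar x) y =
  \sum_(0 <= k < 27) (\sum_(i <- Q27_adj k) x (inZp i)) * y (inZp k).
Proof.
rewrite /dotl big_mkord; apply: eq_bigr => j _; rewrite ffunE.
by have -> : (inZp j : 'I_27) = j by apply: val_inj; rewrite /= modn_small.
Qed.

Lemma polar_form_Q27 : polar_form Q27 Q27_polar.
Proof.
split=> [x y|x y|x|x y].
- by rewrite dot_Q27_polar /Q27 /= /Defs.coord /= !addlE unlock /=; ring.
- by apply/ffunP => j; rewrite addlE !ffunE -big_split; apply: eq_bigr => k _; rewrite addlE.
- by rewrite -(bit_addrr (Q27 x)) dot_Q27_polar /Q27 /= /Defs.coord /= unlock /=; ring.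
- by rewrite !dot_Q27_polar unlock /=; ring.
Qed.

Lemma polar_form0 : polar_form (fun _ => 0) (fun _ => zerol).
Proof. by split=> *; rewrite ?dot0l ?addll ?addr0. Qed.

Theorem stabilizer_state_S : stabilizer_state ket_S.
Proof. by rewrite ket_S_quad; exact: stabilizer_state_quad_ket polar_form0. Qed.

Theorem stabilizer_state_QS : stabilizer_state ket_QS.
Proof. by rewrite ket_QS_quad; exact: stabilizer_state_quad_ket polar_form_Q27. Qed.

Lemma tensor_conj_fix n (U P : 'I_n -> 'M[C]_2) (psi phi : state n) :
  (forall j, unitary2 (U j)) -> op_apply (tensor U) psi = phi ->
  op_apply (tensor P) psi = psi ->
  op_apply (tensor (fun j => U j *m P j *m adjoint (U j))) phi = phi.
Proof.
move=> HU <- HP.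
have -> : tensor (fun j => U j *m P j *m adjoint (U j)) =
    op_mul (tensor U) (op_mul (tensor P) (tensor (fun j => adjoint (U j)))).
  by rewrite !tensor_mul; congr tensor; apply: functional_extensionality => j; rewrite mulmxA.
rewrite !op_apply_mul -(op_apply_mul (tensor (fun j => adjoint (U j)))) tensor_mul.
have -> : (fun j => adjoint (U j) *m U j) = (fun _ => 1%:M).
  by apply: functional_extensionality => j; rewrite unitary2_adjointK.
by rewrite op_apply_tensor1 HP.
Qed.

Lemma check_vec_Z_fix k : op_apply (tensor (fun j => pauli_xz 0 (check_vec k j))) ket_S = ket_S.
Proof.
apply: functional_extensionality => x.
have -> : (fun j => pauli_xz 0 (check_vec k j)) = (fun j => pauli_xz (zerol j) (check_vec k j)).
  by apply: functional_extensionality => j; rewrite zerolE.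
rewrite op_apply_tensor_xz addl0 ket_S_quad /quad_ket; case: ifP => Hx; last by rewrite mulr0.
by rewrite check_vec_orth // sgn0 mul1r.
Qed.

(* Evaluated at s, the fixed-point equation makes the coefficient of |Q,S> at s a
   nonzero multiple of its coefficient at 0. *)
Lemma fixed_tensor_shift_in_S (P : 'I_27 -> 'M[C]_2) (s : label 27) :
  (forall j (r c : 'I_2), if c == r + s j then P j r c ^+ 4 = 1 else P j r c = 0) ->
  op_apply (tensor P) ket_QS = ket_QS -> s \in S27.
Proof.
move=> Hs HP; apply: contraT => Hn.
have := congr1 (fun f => f s) HP; rewrite /= (@op_apply_tensor_shift _ _ s); last first.
  by move=> j r c /negPf Hc; move: (Hs j r c); rewrite Hc.
rewrite addll ket_QS_quad /quad_ket S27_0 (negPf Hn) (polar_q0 polar_form_Q27) sgn0 mul1r.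
move/eqP; rewrite mulf_eq0 (negPf ket_norm_neq0) orbF prodf_seq_eq0.
case/hasP => j _; move: (Hs j (s j) (s j + s j)); rewrite eqxx => H4.
by move=> /eqP H0; move: H4; rewrite H0 expr0n => /eqP; rewrite eq_sym oner_eq0.
Qed.

Section LocalClifford.
Variable U : 'I_27 -> 'M[C]_2.
Hypothesis U_clifford : forall j, clifford2 (U j).
Hypothesis U_maps : op_apply (tensor U) ket_S = ket_QS.

Let U_unitary j : unitary2 (U j). Proof. by case: (U_clifford j). Qed.

(* Conjugating the dual stabilizer Z(h) gives a Pauli stabilizer of |Q,S> whose shift is a
   codeword supported in supp h; for a single parity check it must vanish. *)
Lemma clifford_conj_Z_diagonal j :
  forall r c : 'I_2, c != r -> (U j *m pauliZ *m adjoint (U j)) r c = 0.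
Proof.
have [k Hkj] := check_vec_cover j.
pose P j := U j *m pauli_xz 0 (check_vec k j) *m adjoint (U j).
have HP : op_apply (tensor P) ket_QS = ket_QS.
  exact: tensor_conj_fix U_unitary U_maps (check_vec_Z_fix k).
have Hmono j' : exists s : 'I_2, forall r c : 'I_2,
    if c == r + s then P j' r c ^+ 4 = 1 else P j' r c = 0.
  by apply: pauli_group_monomial; apply: (U_clifford j').2.1; exact: pauli_group_xz.
have [s Hs] := fin_all_exists Hmono.
have s_supp j' : check_vec k j' = 0 -> s j' = 0.
  move=> H0; have EP : P j' = 1%:M by rewrite /P H0 pauli_xz00 mulmx1 U_unitary.
  case: (bit_cases (s j')) => // E1; move: (Hs j' 0 1).
  by rewrite E1 add0r eqxx EP mxE /= expr0n /= => /eqP; rewrite eq_sym oner_eq0.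
have s0 : [ffun j' => s j'] = zerol.
  apply: (S27_check_support (k := k)); last by move=> j' /s_supp; rewrite ffunE.
  by apply: (fixed_tensor_shift_in_S _ HP) => j' r c; rewrite ffunE; exact: Hs.
move=> r c Hrc; have := Hs j r c.
have -> : s j = 0 by move/ffunP: s0 => /(_ j); rewrite !ffunE.
by rewrite addr0 (negPf Hrc) /P Hkj pauli_xz01.
Qed.

(* Every factor is monomial, so [tensor U] maps each |x> to a multiple of |x + t>;
   comparing |S> and |Q,S> then makes (-1)^Q(x) a product of fourth roots of unity
   over the support of x. *)
Lemma clifford_sign_character :
  exists h : 'I_27 -> C, (forall j, h j ^+ 4 = 1) /\
    forall x, x \in S27 -> sgn (Q27 x) = \prod_j h j ^+ val (x j).
Proof.
have HM j : exists t, monomial_shift (U j) t.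
  exact: unitary2_diag_conj_monomial (U_unitary j) (@clifford_conj_Z_diagonal j).
have [T HT] := fin_all_exists HM.
have [w Hw] := fin_all_exists (fun j => clifford2_monomial_ratio (U_clifford j) (HT j)).
pose t : label 27 := [ffun j => T j].
have Hsh x : ket_QS x = (\prod_j U j (x j) (x j + T j)) * ket_S (addl x t).
  rewrite -U_maps (@op_apply_tensor_shift _ _ t).
    by congr (_ * _); apply: eq_bigr => j _; rewrite ffunE.
  by move=> j r c; rewrite ffunE => /negPf H; move: (HT j r c); rewrite H => /eqP.
have tS : t \in S27.
  apply: contraT => Hn; move: (Hsh zerol); rewrite add0l ket_S_quad ket_QS_quad /quad_ket.
  rewrite S27_0 (negPf Hn) mulr0 => /eqP.
  by rewrite (negPf (mulf_neq0 (sgn_neq0 _) ket_norm_neq0)).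
have Hp0 : \prod_j U j 0 (0 + T j) = 1.
  have E : \prod_j U j (zerol j) (zerol j + T j) = \prod_j U j 0 (0 + T j).
    by apply: eq_bigr => j _; rewrite zerolE.
  move: (Hsh zerol); rewrite E add0l ket_S_quad ket_QS_quad /quad_ket S27_0 tS.
  rewrite (polar_q0 polar_form_Q27) sgn0 mul1r -{1}[ket_norm]mul1r.
  by move/(mulIf ket_norm_neq0)/esym.
exists (fun j => w j ^+ 3); split.
  by move=> j; rewrite -exprM mulnC exprM (Hw j).1 expr1n.
move=> x Hx; move: (Hsh x); rewrite ket_S_quad ket_QS_quad /quad_ket S27_addr // Hx.
rewrite sgn0 mul1r => /(mulIf ket_norm_neq0) ->.
transitivity (\prod_j ((w j ^+ 3) ^+ val (x j) * U j 0 (0 + T j))); last first.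
  by rewrite big_split /= Hp0 mulr1.
apply: eq_bigr => j _; case: (bit_cases (x j)) => ->; first by rewrite expr0 mul1r.
by case: (Hw j) => Hw4 E; rewrite expr1 add0r E mulrA -exprSr Hw4 mul1r.
Qed.

End LocalClifford.

(* Fourteen codewords x_p of S (by their coefficients) with multiplicities m_p such that
   sum_p m_p x_p = 0 mod 4 coordinatewise while sum_p m_p Q(x_p) is odd. *)
Definition sign_certificate : seq (seq nat * nat) :=
  [:: ([:: 0;0;0;0;0;1], 1); ([:: 0;0;0;0;1;0], 1); ([:: 0;0;0;0;1;1], 2);
      ([:: 0;0;0;1;0;0], 3); ([:: 0;0;0;1;1;0], 1); ([:: 0;0;1;0;0;0], 1);
      ([:: 0;0;1;0;0;1], 3); ([:: 0;0;1;0;1;0], 1); ([:: 0;1;0;0;0;0], 2);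
      ([:: 0;1;0;0;0;1], 1); ([:: 0;1;1;0;0;0], 3); ([:: 1;0;0;0;0;0], 2);
      ([:: 1;0;0;0;0;1], 3); ([:: 1;0;0;0;1;0], 1)]%N.

Definition cert_word (bs : seq nat) : label 27 := encode (coeffs_of bs).

Lemma val_cert_word bs j :
  val (cert_word bs j) = encodeN [seq (nth 0%N bs k %% 2)%N | k <- iota 0 6] (val j).
Proof.
rewrite val_encode; congr encodeN; apply/eq_in_map => k; rewrite mem_iota => /andP [_ Hk].
by rewrite ffunE /= (modn_small Hk).
Qed.

Lemma sign_certificate_Q :
  odd (\sum_(p <- sign_certificate) val (Q27 (cert_word p.1)) * p.2).
Proof.
have decide : odd (\sum_(p <- sign_certificate)
    Q27N (fun k => encodeN [seq (nth 0%N p.1 k %% 2)%N | k <- iota 0 6] (k %% 27)) * p.2).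
  by rewrite /encodeN unlock; vm_compute.
congr odd: decide; apply: eq_bigr => p _; congr (_ * _)%N.
by rewrite val_Q27; apply: Q27N_ext => k; rewrite val_cert_word.
Qed.

Lemma sign_certificate_words j :
  ((\sum_(p <- sign_certificate) val (cert_word p.1 j) * p.2) %% 4 = 0)%N.
Proof.
have decide : all (fun j => ((\sum_(p <- sign_certificate)
    p.2 * encodeN [seq (nth 0%N p.1 k %% 2)%N | k <- iota 0 6] j) %% 4 == 0)%N) (iota 0 27).
  by rewrite /encodeN unlock; vm_compute.
apply/eqP; move: (allP decide _ (mem_iota_ord j)); congr (_ %% 4 == _)%N.
by apply: eq_bigr => p _; rewrite val_cert_word mulnC.
Qed.

Lemma no_quartic_sign_character (h : 'I_27 -> C) : (forall j, h j ^+ 4 = 1) ->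
  ~ (forall x, x \in S27 -> sgn (Q27 x) = \prod_j h j ^+ val (x j)).
Proof.
move=> h4 Hh.
have := congr1 (fun F => \prod_(p <- sign_certificate) F p ^+ p.2)
  (functional_extensionality _ _ (fun p : seq nat * nat => Hh _ (encode_in (coeffs_of p.1)))).
rewrite /= -/cert_word.
have -> : \prod_(p <- sign_certificate) sgn (Q27 (cert_word p.1)) ^+ p.2 = -1.
  rewrite /sgn; under eq_bigr => p _ do rewrite -exprM.
  by rewrite prodrXr -signr_odd sign_certificate_Q expr1.
have -> : \prod_(p <- sign_certificate) (\prod_j h j ^+ val (cert_word p.1 j)) ^+ p.2 = 1.
  under eq_bigr => p _ do rewrite -prodrXl.
  rewrite exchange_big /=; apply: big1 => j _; under eq_bigr => p _ do rewrite -exprM.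
  by rewrite prodrXr -(expr_mod _ (h4 j)) sign_certificate_words expr0.
by move/eqP; rewrite eq_sym (negPf oner_neqN1).
Qed.

Theorem not_LC_equiv_S_QS : ~ LC_equiv ket_S ket_QS.
Proof.
move=> [U [HU HUS]]; have [h [h4 Hh]] := clifford_sign_character HU HUS.
exact: no_quartic_sign_character h4 Hh.
Qed.

Theorem mainTheorem1 :
  [/\ stabilizer_state ket_S,
      stabilizer_state ket_QS,
      LU_equiv ket_S ket_QS,
      ~ LC_equiv ket_S ket_QS &
      ~ (forall (n : nat) (psi0 psi1 : state n),
           stabilizer_state psi0 -> stabilizer_state psi1 ->
           LU_equiv psi0 psi1 -> LC_equiv psi0 psi1)].
Proof.
split; [exact: stabilizer_state_S | exact: stabilizer_state_QS | exact: LU_equiv_S_QS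
       | exact: not_LC_equiv_S_QS |].
move=> LU_LC; apply: not_LC_equiv_S_QS.
exact: LU_LC stabilizer_state_S stabilizer_state_QS LU_equiv_S_QS.
Qed.
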